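(* Let $\Phi(z)\in K(z)$ have degree $d\ge1$; put $B_0=B_0(\Phi)$ and $c_0=\Phi(0)$. Assume $\Phi$ has no poles in $D(0,B_0)^-$, so that $\Phi(D(0,B_0)^-)=D(c_0,R)^-$ for some $R>0$. Suppose $|c_0|\le1$ and $R\le1$. Then $\mathrm{Lip}_{\mathrm{Berk}}(\Phi|_{[0,\zeta_{0,B_0}]})\le d/B_0$.
   Context: $K$ is a complete, algebraically closed field with a nontrivial nonarchimedean absolute value. $D(a,r)^-=\{z\in K:|z-a|<r\}$. Fix $q>1$. $\mathbf P^1_{\mathrm{Berk}}$ is the Berkovich projective line over $K$ (tree containing $\mathbf P^1(K)$); $\zeta_{a,r}$ is the point of the disc $D(a,r)=\{|z-a|\le r\}$, $\zeta_{a,0}=a$, $\zeta_G=\zeta_{0,1}$; $[x,y]$ unique path, $(x,y]$ half-open. $\rho$ is the logarithmic path metric on $\mathbf H^1=\mathbf P^1_{\mathrm{Berk}}\setminus\mathbf P^1(K)$ (path $\{\zeta_{a,r}:R_1\le r\le R_2\}$ has length $\log_q(R_2/R_1)$); $\mathrm{diam}_G(x)=q^{-\rho(\zeta_G,x)}$ on $\mathbf H^1$, $0$ on $\mathbf P^1(K)$. $x\vee_G y$ first common point of $[x,\zeta_G],[y,\zeta_G]$; $d(x,y)=2\mathrm{diam}_G(x\vee_G y)-\mathrm{diam}_G(x)-\mathrm{diam}_G(y)$. For $S\subseteq\mathbf P^1_{\mathrm{Berk}}$, $\mathrm{Lip}_{\mathrm{Berk}}(\Phi|_S)=\sup_{x\ne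 y\in S}d(\Phi x,\Phi y)/d(x,y)$. For $a\in\mathbf P^1(K)$, $0<r<1$, $Q_{a,r}$ is the point of $[a,\zeta_G]$ with $\mathrm{diam}_G=r$, $\mathcal B(a,r)^-=\{x:Q_{a,r}\in(x,\zeta_G]\}$, $\mathcal B(a,1)^-=\bigcup_{r<1}\mathcal B(a,r)^-$; $B_0(\Phi)=\sup\{0<r\le1:\Phi(\mathcal B(a,r)^-)\ne\mathbf P^1_{\mathrm{Berk}}\ \forall a\in\mathbf P^1(K)\}$. *)

From HB Require Import structures.
From mathcomp Require Import all_boot all_order all_algebra.
From Stdlib Require Import Reals ClassicalEpsilon.
Set Implicit Arguments. Unset Strict Implicit. Unset Printing Implicit Defensive.
Import GRing.Theory.

Delimit Scope ring_scope with ring.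
Open Scope R_scope.

Record nonarch_abs (K : fieldType) (av : K -> R) : Prop := {
  av_nonneg   : forall x, 0 <= av x;
  av_eq0      : forall x, av x = 0 <-> x = GRing.zero;
  av_mul      : forall x y, av (GRing.mul x y) = av x * av y;
  av_ultra    : forall x y, av (GRing.add x y) <= Rmax (av x) (av y);
  av_nontriv  : exists x, av x <> 0 /\ av x <> 1;
  av_complete : forall u : nat -> K,
      (forall eps, 0 < eps -> exists N, forall m n, (N <= m)%nat -> (N <= n)%nat ->
                    av (GRing.add (u m) (GRing.opp (u n))) < eps) ->
      exists l, forall eps, 0 < eps -> exists N, forall n, (N <= n)%nat ->
                    av (GRing.add (u n) (GRing.opp l)) < eps }.

Definition is_inf (E : R -> Prop) (m : R) : Prop :=
  (forall x, E x -> m <= x) /\ (forall b, (forall x, E x -> b <= x) -> b <= m).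
Definition Rinf (E : R -> Prop) : R := epsilon (inhabits 0) (fun m => is_inf E m).

Section Berk.
Variable K : fieldType.
Variable av : K -> R.

(* Points of the Berkovich affine line: multiplicative seminorms on K[T]
   extending av.  Points of P^1_Berk: [Some x] for x in A^1_Berk, [None] = oo. *)
Definition is_berkA (x : {poly K} -> R) : Prop :=
  (forall c : K, x (c%:P)%ring = av c) /\
  (forall f g, x (f * g)%ring = x f * x g) /\
  (forall f g, x (f + g)%ring <= Rmax (x f) (x g)) /\
  (forall f, 0 <= x f).

Definition P1B := option ({poly K} -> R).

Definition is_berk (p : P1B) : Prop :=
  match p with None => True | Some x => is_berkA x end.

Definition typeI (a : K) : {poly K} -> R := fun f => av (f.[a])%ring.
Definition ptK (a : option K) : P1B := option_map typeI a.

(* zeta_{a,r}: sup norm on the disc D(a,r); f(T+a) = sum b_i T^i,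
   zeta_{a,r}(f) = max_i |b_i| r^i.  For r = 0 this is the type I point a. *)
Definition zeta (a : K) (r : R) : {poly K} -> R := fun f =>
  let g := (f \Po ('X + a%:P))%ring in
  foldr Rmax 0 [seq av (g`_i)%ring * r ^ i | i <- iota 0 (size g)].

Definition phi_deg (P Q : {poly K}) : nat := maxn (size P).-1 (size Q).-1.

(* Q^n f(P/Q) with n = deg f *)
Definition phi_homog (P Q f : {poly K}) : {poly K} :=
  (\sum_(i < size f) f`_i *: (P ^+ i * Q ^+ ((size f).-1 - i)))%ring.

Definition phi_inf (P Q : {poly K}) : P1B :=
  if (size Q < size P)%nat then None
  else Some (typeI (if (size P == size Q)%nat then (lead_coef P / lead_coef Q)%ring else 0%ring)).

(* Action of Phi on P^1_Berk: Phi(x)(f) = x(Q^n f(P/Q)) / x(Q)^n, and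
   Phi(x) = oo when x(Q) = 0 (x a type I pole). *)
Definition phiB (P Q : {poly K}) (p : P1B) : P1B :=
  match p with
  | None => phi_inf P Q
  | Some x =>
      match Req_EM_T (x Q) 0 with
      | left _ => None
      | right _ => Some (fun f => x (phi_homog P Q f) / (x Q) ^ (size f).-1)
      end
  end.

Definition phiK (P Q : {poly K}) (z : K) : K := (P.[z] / Q.[z])%ring.

(* ---- diam_G and the join relative to zeta_G ----
   delta_inf x y = diam(x \/_oo y) = inf_a max(x(T-a), y(T-a)),
   deltaG x y = diam_G(x \/_G y), given by the standard formula
   diam_G(x \/_G y) = diam(x \/_oo y) / (max(1,|x|) max(1,|y|)),
   diam_G(x \/_G oo) = 1/max(1,|x|), diam_G(oo) = 0. *)
Definition delta_inf (x y : {poly K} -> R) : R :=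
  Rinf (fun t => exists a : K,
          t = Rmax (x ('X - a%:P)%ring) (y ('X - a%:P)%ring)).

Definition deltaG (p1 p2 : P1B) : R :=
  match p1, p2 with
  | Some x, Some y => delta_inf x y / (Rmax 1 (x 'X%ring) * Rmax 1 (y 'X%ring))
  | Some x, None => 1 / Rmax 1 (x 'X%ring)
  | None, Some y => 1 / Rmax 1 (y 'X%ring)
  | None, None => 0
  end.

Definition diamG (p : P1B) : R := deltaG p p.

Definition berk_dist (p1 p2 : P1B) : R :=
  2 * deltaG p1 p2 - diamG p1 - diamG p2.

(* Berkovich open ball B(a,r)^- = {x : Q_{a,r} in (x, zeta_G]}
   = {x : diam_G(x \/_G a) < r}  (for 0 < r <= 1). *)
Definition in_ball (a : option K) (r : R) (p : P1B) : Prop :=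
  deltaG p (ptK a) < r.

Definition maps_onto_ball (P Q : {poly K}) (a : option K) (r : R) : Prop :=
  forall y, is_berk y -> exists x, is_berk x /\ in_ball a r x /\ phiB P Q x = y.

Definition B0_set (P Q : {poly K}) (r : R) : Prop :=
  0 < r <= 1 /\ forall a : option K, ~ maps_onto_ball P Q a r.

Definition seg0 (B : R) (p : P1B) : Prop :=
  exists r, 0 <= r <= B /\ p = Some (zeta 0%ring r).

End Berk.

From HB Require Import structures.
From mathcomp Require Import all_boot all_order all_algebra.
From Stdlib Require Import Reals Lra Psatz ClassicalEpsilon.
From mathcomp Require Import zify.
Set Implicit Arguments.
Unset Strict Implicit.
Import GRing.Theory.
Delimit Scope ring_scope with ring.
Open Scope R_scope.

(* Write Phi = P / Q and F = P - c0 Q, so that Phi - c0 = F / Q.  For r <= B0 the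
   point zeta_{0,r} is sent to the disc point zeta_{c0, |F|_r / |Q(0)|}, where
   |f|_r = max_i |f_i| r^i is the Gauss norm: since Q has no zero in D(0,B0)^-,
   its constant term dominates, |Q|_r = |Q(0)|.  Between two disc points
   zeta_{c,r1}, zeta_{c,r2} with |c|, r1, r2 <= 1 the Berkovich distance is
   |r1 - r2|, so the claim becomes the Lipschitz bound
   | |F|_r1 - |F|_r2 | <= d |Q(0)| / B0 * |r1 - r2|.  This follows from
   |F_i| B0^i <= |Q(0)| and deg F <= d.  The coefficient bound comes from
   |F(z)| = |Phi(z) - c0| |Q(z)| <= R |Q(0)| on D(0,B0)^- by the maximum modulus
   principle: K being algebraically closed, its value group is dense and its
   residue field infinite, so |F|_s is attained at some |z| <= s avoiding the
   residue discs of the roots of F. *)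

Lemma foldr_Rmax_ge0 (s : seq R) : 0 <= foldr Rmax 0 s.
Proof. by elim: s => [|x s IH] /=; [lra | apply: Rle_trans IH (Rmax_r _ _)]. Qed.

Lemma le_foldr_Rmax (T : eqType) (g : T -> R) (s : seq T) i :
  i \in s -> g i <= foldr Rmax 0 [seq g j | j <- s].
Proof.
elim: s => [|j s IH] //=; rewrite inE => /orP [/eqP ->|/IH]; first exact: Rmax_l.
by move/Rle_trans; apply; apply: Rmax_r.
Qed.

Lemma foldr_Rmax_le (T : eqType) (g : T -> R) (s : seq T) c : 0 <= c ->
  (forall i, i \in s -> g i <= c) -> foldr Rmax 0 [seq g j | j <- s] <= c.
Proof.
move=> c0; elim: s => [|j s IH] //= hg; apply: Rmax_lub; first by apply/hg/mem_head.
by apply: IH => i hi; apply/hg; rewrite inE hi orbT.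
Qed.

Lemma pow_sub_pow_le a b k : 0 <= b <= a ->
  a ^ k.+1 - b ^ k.+1 <= INR k.+1 * a ^ k * (a - b).
Proof.
move=> hab; elim: k => [|k IH]; first by simpl; lra.
have hbk : b ^ k.+1 * (a - b) <= a ^ k.+1 * (a - b).
  by apply/Rmult_le_compat_r/pow_incr; lra.
have hIH : a * (a ^ k.+1 - b ^ k.+1) <= a * (INR k.+1 * a ^ k * (a - b)).
  by apply: Rmult_le_compat_l; lra.
rewrite (S_INR k.+1) /= in hbk hIH *; lra.
Qed.

Lemma mul_pow_sub_le a c B r1 r2 k : 0 < B -> 0 <= a -> a * B ^ k.+1 <= c ->
  0 <= r2 <= r1 -> r1 <= B -> a * r1 ^ k.+1 - a * r2 ^ k.+1 <= INR k.+1 / B * c * (r1 - r2).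
Proof.
move=> hB ha hc hr hr1.
have hk : a * r1 ^ k <= c / B.
  have h1 : a * r1 ^ k <= a * B ^ k by apply/Rmult_le_compat_l/pow_incr; lra.
  apply: Rle_trans h1 _; apply: (Rmult_le_reg_r B) => //.
  have -> : c / B * B = c by field; lra.
  simpl in hc; lra.
have hd := pow_sub_pow_le k hr.
have hk1 := pos_INR k.+1.
have -> : INR k.+1 / B * c * (r1 - r2) = c / B * (INR k.+1 * (r1 - r2)) by field; lra.
apply: Rle_trans (_ : a * (INR k.+1 * r1 ^ k * (r1 - r2)) <= _).
  by rewrite -Rmult_minus_distr_l; apply: Rmult_le_compat_l.
have := Rmult_le_compat_r (INR k.+1 * (r1 - r2)) _ _ ltac:(nra) hk; lra.
Qed.

Lemma bernoulli_ineq h n : -1 <= h -> 1 + INR n * h <= (1 + h) ^ n.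
Proof.
move=> hh; elim: n => [|n IH]; first by simpl; lra.
rewrite S_INR /=; have := pos_INR n; nra.
Qed.

Lemma exists_pow_between q A : 1 < q -> 1 <= A -> exists N, A < q ^ N <= A * q.
Proof.
move=> hq hA.
have [m hm] : exists m, A < q ^ m.
  have [m hm] := Pow_x_infinity q ltac:(rewrite Rabs_right; lra) (A + 1).
  exists m; have := hm m (le_n m); rewrite Rabs_right; [lra | apply/Rle_ge/pow_le; lra].
elim: m hm => [|m IH] /= hm; first lra.
case: (Rle_or_lt (q ^ m) A) => hc; last exact: IH.
by exists m.+1 => /=; split; [lra | nra].
Qed.

Lemma exists_pow_ratio_between q a b : 1 < q -> 0 < a -> a * q < b ->
  exists N M, a < q ^ N / q ^ M < b.
Proof.
move=> hq ha hb.
have [M [hM _]] := exists_pow_between hq (Rmax_l 1 (/ a)).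
have hqM : 0 < q ^ M by apply: pow_lt; lra.
have hA : 1 <= a * q ^ M.
  have : a * / a <= a * q ^ M.
    by apply/Rmult_le_compat_l/Rlt_le/(Rle_lt_trans _ _ _ (Rmax_r 1 (/ a)) hM); lra.
  by rewrite Rinv_r; lra.
have [N [hN1 hN2]] := exists_pow_between hq hA.
exists N, M; have -> : q ^ N / q ^ M = q ^ N * / q ^ M by [].
split; apply: (Rmult_lt_reg_r (q ^ M)) => //; rewrite Rmult_assoc Rinv_l; nra.
Qed.

Lemma mul_pow_le_of_lt a c B k : 0 <= a -> 0 < B ->
  (forall s, 0 < s < B -> a * s ^ k <= c) -> a * B ^ k <= c.
Proof.
move=> ha hB hs; case: k hs => [|k] hs; first by have := hs (B / 2) ltac:(lra).
apply: Rle_plus_epsilon => eps heps.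
set L := a * INR k.+1 * B ^ k.
have hL : 0 <= L.
  by apply/Rmult_le_pos/pow_le; [apply/Rmult_le_pos/pos_INR | ]; lra.
set delta := Rmin (B / 2) (eps / (L + 1)).
have hd : 0 < delta by apply: Rmin_pos; [lra | apply: Rdiv_lt_0_compat; lra].
have hdB : delta <= B / 2 by apply: Rmin_l.
have hLd : L * delta <= eps.
  have : delta * (L + 1) <= eps / (L + 1) * (L + 1).
    by apply: Rmult_le_compat_r (Rmin_r _ _); lra.
  have -> : eps / (L + 1) * (L + 1) = eps by field; lra.
  nra.
have hBd : 0 <= B - delta <= B by lra.
have := hs (B - delta) ltac:(lra).
have := Rmult_le_compat_l a _ _ ha (pow_sub_pow_le k hBd).
rewrite /L in hLd; lra.
Qed.

Lemma Rprod_le (T : eqType) (s : seq T) (g h : T -> R) :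
  (forall i, i \in s -> 0 <= g i <= h i) ->
  \big[Rmult/1]_(i <- s) g i <= \big[Rmult/1]_(i <- s) h i.
Proof.
move=> hgh; suff : 0 <= \big[Rmult/1]_(i <- s) g i <= \big[Rmult/1]_(i <- s) h i by case.
elim: s hgh => [|j s IH] hgh; first by rewrite !big_nil; lra.
have [hj hs] : 0 <= g j <= h j /\ forall i, i \in s -> 0 <= g i <= h i.
  by split=> [|i hi]; apply: hgh; rewrite inE ?eqxx ?hi ?orbT.
by rewrite !big_cons; have := IH hs; nra.
Qed.

Lemma Rprod_gt1 (T : eqType) (s : seq T) (g : T -> R) :
  s != [::] -> (forall i, i \in s -> 1 < g i) -> 1 < \big[Rmult/1]_(i <- s) g i.
Proof.
elim: s => [|j s IH] // _ hg; rewrite big_cons.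
have hj : 1 < g j by apply/hg/mem_head.
have hs : 1 <= \big[Rmult/1]_(i <- s) g i.
  case: s IH hg => [|k s] IH hg; first by rewrite big_nil; lra.
  by left; apply: IH => // i hi; apply: hg; rewrite inE hi orbT.
nra.
Qed.

Lemma Rprod_eq1 (T : eqType) (s : seq T) (g : T -> R) :
  (forall i, i \in s -> 0 <= g i <= 1) ->
  \big[Rmult/1]_(i <- s) g i = 1 -> forall i, i \in s -> g i = 1.
Proof.
elim: s => [|j s IH] // hg; rewrite big_cons => h1.
have [hj hs] : 0 <= g j <= 1 /\ forall i, i \in s -> 0 <= g i <= 1.
  by split=> [|i hi]; apply: hg; rewrite inE ?eqxx ?hi ?orbT.
have hp : 0 <= \big[Rmult/1]_(i <- s) g i <= 1.
  elim: s hs {IH hg h1} => [|k s IH] hs; rewrite ?big_nil ?big_cons; first lra.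
  have := hs k (mem_head _ _).
  have := IH (fun i hi => hs i (mem_behead (s := k :: s) hi)); nra.
have hgj : g j = 1 by nra.
move=> i; rewrite inE => /orP [/eqP -> //|]; apply: IH => //; nra.
Qed.

Lemma is_lub_Ioc (E : R -> Prop) m : (forall r, E r -> 0 < r <= 1) -> is_lub E m -> 0 < m <= 1.
Proof.
move=> hE [hub hleast]; split; last by apply: hleast => r /hE [].
apply: Rnot_le_lt => hm.
have : m <= m - 1 by apply: hleast => r hr; have := hub r hr; have := hE r hr; lra.
lra.
Qed.

Lemma Rinf_min (E : R -> Prop) m : E m -> (forall x, E x -> m <= x) -> Rinf E = m.
Proof.
move=> hm hlow; rewrite /Rinf.
have [h1 h2] := epsilon_spec (inhabits 0) (is_inf E) (ex_intro _ m (conj hlow (fun b hb => hb m hm))).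
by apply: Rle_antisym; [apply: h1 | apply: h2].
Qed.

Lemma Rmax_div x y q : 0 < q -> Rmax (x * q) y / q = Rmax x (y / q).
Proof.
move=> hq; rewrite /Rmax.
have e : y / q * q = y by field; lra.
case: Rle_dec => h1; case: Rle_dec => h2 //.
- by exfalso; apply: h2; apply: (Rmult_le_reg_r q) => //; rewrite e.
- by exfalso; apply: h1; rewrite -e; apply: Rmult_le_compat_r; lra.
- by field; lra.
Qed.

Lemma lipschitz_ratio_le Z1 Z2 r1 r2 q L : 0 < q -> r1 <> r2 ->
  Rabs (Z1 - Z2) <= L * q * Rabs (r1 - r2) -> Rabs (Z1 / q - Z2 / q) / Rabs (r1 - r2) <= L.
Proof.
move=> hq hr hZ.
have hd : 0 < Rabs (r1 - r2) by apply: Rabs_pos_lt; lra.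
have -> : Z1 / q - Z2 / q = (Z1 - Z2) / q by field; lra.
rewrite /Rdiv Rabs_mult Rabs_inv (Rabs_right q); last lra.
apply: (Rmult_le_reg_r (Rabs (r1 - r2))) => //; apply: (Rmult_le_reg_r q) => //.
have -> : Rabs (Z1 - Z2) / q / Rabs (r1 - r2) * Rabs (r1 - r2) * q = Rabs (Z1 - Z2) by field; lra.
lra.
Qed.

Section AbsoluteValue.
Variables (K : fieldType) (av : K -> R).
Hypothesis hav : nonarch_abs av.

Lemma av_ge0 x : 0 <= av x. Proof. exact: av_nonneg hav x. Qed.

Lemma av0 : av 0%ring = 0.
Proof. exact/(av_eq0 hav). Qed.

Lemma av_gt0 x : x <> 0%ring -> 0 < av x.
Proof. move=> x0; have := av_ge0 x; have : av x <> 0 by move/(av_eq0 hav). lra. Qed.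

Lemma avM x y : av (x * y)%ring = av x * av y.
Proof. exact: av_mul hav x y. Qed.

Lemma av1 : av 1%ring = 1.
Proof.
have h := avM 1%ring 1%ring; rewrite mulr1 in h.
have : (1 <> 0 :> K)%ring by apply/eqP; exact: oner_neq0.
move/av_gt0; nra.
Qed.

Lemma avN x : av (- x)%ring = av x.
Proof.
have hN1 : av (-1)%ring = 1.
  have := avM (-1)%ring (-1)%ring; rewrite mulrNN mulr1 av1.
  have := av_ge0 (-1)%ring; nra.
by rewrite -mulN1r avM hN1 Rmult_1_l.
Qed.

Lemma avD_le x y : av (x + y)%ring <= Rmax (av x) (av y).
Proof. exact: av_ultra hav x y. Qed.

Lemma avB_le x y : av (x - y)%ring <= Rmax (av x) (av y).
Proof. by rewrite -(avN y); apply: avD_le. Qed.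

Lemma avD_eq x y : av y < av x -> av (x + y)%ring = av x.
Proof.
move=> hyx; have h1 := avD_le x y.
have h2 := avB_le (x + y)%ring y; rewrite addrK in h2.
move: h1 h2; unfold Rmax; repeat destruct Rle_dec; lra.
Qed.

Lemma avX x n : av (x ^+ n)%ring = av x ^ n.
Proof. by elim: n => [|n IH]; rewrite ?expr0 ?av1 // exprS avM IH. Qed.

Lemma avV x : x <> 0%ring -> av (x^-1)%ring = / av x.
Proof.
move=> x0; have := avM x (x^-1)%ring; rewrite mulfV ?av1; last exact/eqP.
have := av_gt0 x0 => hx h.
apply: (Rmult_eq_reg_l (av x)); last lra.
by rewrite -h Rinv_r //; lra.
Qed.

Lemma av_prod (I : Type) (s : seq I) (f : I -> K) :
  av (\prod_(i <- s) f i)%ring = \big[Rmult/1]_(i <- s) av (f i).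
Proof.
elim: s => [|i s IH]; first by rewrite !big_nil av1.
by rewrite !big_cons avM IH.
Qed.

Lemma av_sum_le n (f : 'I_n -> K) c :
  0 <= c -> (forall i, av (f i) <= c) -> av (\sum_(i < n) f i)%ring <= c.
Proof.
move=> c0 hf; apply: (big_ind (fun x => av x <= c)) => //; first by rewrite av0.
move=> x y hx hy; apply: Rle_trans (avD_le x y) _; exact: Rmax_lub.
Qed.

Lemma exists_av_gt1 : exists x, 1 < av x.
Proof.
have [x [hx0 hx1]] := av_nontriv hav.
have x0 : x <> 0%ring by move=> e; apply: hx0; rewrite e av0.
case: (Rle_or_lt (av x) 1) => hx; last by exists x.
exists (x^-1)%ring; rewrite avV // -Rinv_1.
by apply: Rinv_lt_contravar; have := av_gt0 x0; nra.
Qed.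

(* Each open disc [D(b, s)^-] contains at most one point of [xs]. *)
Lemma exists_far_point (xs bs : seq K) s : uniq xs ->
  {in xs &, forall x y, x != y -> s <= av (x - y)%ring} -> (size bs < size xs)%nat ->
  exists2 x, x \in xs & forall b, b \in bs -> s <= av (x - b)%ring.
Proof.
elim: bs xs => [|b bs IH] xs hu hxs hsize.
  by case: xs hu hxs hsize => [|x xs] //= *; exists x; rewrite ?mem_head.
case: (classic (exists2 y, y \in xs & av (y - b)%ring < s)) => [[y hy hyb]|hno].
  have hsub : {subset rem y xs <= xs} by apply: mem_rem.
  have [x hx hfar] : exists2 x, x \in rem y xs & forall b, b \in bs -> s <= av (x - b)%ring.
    apply: IH; first exact: rem_uniq.
      by move=> x x' /hsub hx /hsub hx'; apply: hxs.
    by rewrite size_rem //=; move: hsize => /=; lia.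
  have hxy : x != y by move: hx; rewrite (mem_rem_uniq _ hu) inE => /andP [].
  exists x; first exact: hsub.
  move=> b'; rewrite inE => /orP [/eqP ->|]; last exact: hfar.
  apply: Rnot_lt_le => hxb.
  have := avB_le (x - b)%ring (y - b)%ring; rewrite opprB addrA subrK => hle.
  have := Rle_lt_trans _ _ _ hle (Rmax_lub_lt _ _ _ hxb hyb).
  by apply/Rle_not_lt/hxs => //; apply: hsub.
have [x hx hfar] := IH xs hu hxs (ltnW hsize).
exists x => // b'; rewrite inE => /orP [/eqP ->|]; last exact: hfar.
by apply: Rnot_lt_le => hxb; apply: hno; exists x.
Qed.

End AbsoluteValue.

Section GaussNorm.
Variables (K : fieldType) (av : K -> R).
Hypothesis hav : nonarch_abs av.
Implicit Types f g : {poly K}.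

Definition gauss_norm (r : R) (f : {poly K}) : R :=
  foldr Rmax 0 [seq av f`_i * r ^ i | i <- iota 0 (size f)].

Lemma zeta0_gauss_norm r f : zeta av 0%ring r f = gauss_norm r f.
Proof. by rewrite /zeta polyC0 addr0 comp_polyXr. Qed.

Lemma gauss_norm_ge0 r f : 0 <= gauss_norm r f.
Proof. exact: foldr_Rmax_ge0. Qed.

Lemma coef_le_gauss_norm r f i : av f`_i * r ^ i <= gauss_norm r f.
Proof.
case: (ltnP i (size f)) => hi.
  by rewrite /gauss_norm; apply: le_foldr_Rmax; rewrite mem_iota.
by rewrite nth_default // (av0 hav) Rmult_0_l; apply: gauss_norm_ge0.
Qed.

Lemma gauss_norm_le r f c :
  (forall i, av f`_i * r ^ i <= c) -> gauss_norm r f <= c.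
Proof.
move=> hc; apply: foldr_Rmax_le => [|i _]; last exact: hc.
by have := hc (size f); rewrite nth_default // (av0 hav) Rmult_0_l.
Qed.

Lemma gauss_norm_N r f : gauss_norm r (- f)%ring = gauss_norm r f.
Proof.
apply: Rle_antisym; apply: gauss_norm_le => i.
  by rewrite coefN (avN hav); apply: coef_le_gauss_norm.
by rewrite -(avN hav f`_i) -coefN; apply: coef_le_gauss_norm.
Qed.

Lemma gauss_norm_Z r e f : gauss_norm r (e *: f)%ring = av e * gauss_norm r f.
Proof.
apply: Rle_antisym.
  apply: gauss_norm_le => i; rewrite coefZ (avM hav) Rmult_assoc.
  exact/Rmult_le_compat_l/coef_le_gauss_norm/av_ge0.
have [->|e0] := eqVneq e 0%ring.
  by rewrite (av0 hav) Rmult_0_l; apply: gauss_norm_ge0.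
have he : 0 < av e by apply/av_gt0/eqP.
have hf : gauss_norm r f <= / av e * gauss_norm r (e *: f)%ring.
  apply: gauss_norm_le => i.
  have -> : av f`_i * r ^ i = / av e * (av (e *: f)%ring`_i * r ^ i).
    by rewrite coefZ (avM hav); field; lra.
  by apply/Rmult_le_compat_l/coef_le_gauss_norm; left; apply: Rinv_0_lt_compat.
have := Rmult_le_compat_l (av e) _ _ (Rlt_le _ _ he) hf.
by rewrite -Rmult_assoc Rinv_r ?Rmult_1_l; lra.
Qed.

Lemma gauss_norm_D_le r f g : 0 <= r ->
  gauss_norm r (f + g)%ring <= Rmax (gauss_norm r f) (gauss_norm r g).
Proof.
move=> r0; apply: gauss_norm_le => i; rewrite coefD.
apply: Rle_trans (Rmult_le_compat_r _ _ _ (pow_le r i r0) (avD_le hav f`_i g`_i)) _.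
have := coef_le_gauss_norm r f i; have := coef_le_gauss_norm r g i.
rewrite /Rmax => hf hg; repeat destruct Rle_dec; lra.
Qed.

Lemma gauss_norm_D_eq r f g : 0 <= r -> gauss_norm r g < gauss_norm r f ->
  gauss_norm r (f + g)%ring = gauss_norm r f.
Proof.
move=> r0 hgf; have h1 := gauss_norm_D_le f g r0.
have h2 := gauss_norm_D_le (f + g)%ring (- g)%ring r0.
rewrite addrK gauss_norm_N in h2.
move: h1 h2; rewrite /Rmax => h1 h2; repeat destruct Rle_dec; lra.
Qed.

Lemma gauss_norm_subZ r (e : K) f g : 0 <= r -> (f`_0 = 0)%ring -> gauss_norm r g = av g`_0 ->
  gauss_norm r (f - e *: g)%ring = Rmax (av e * av g`_0) (gauss_norm r f).
Proof.
move=> r0 f0 hg.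
have heg : gauss_norm r (- (e *: g))%ring = av e * av g`_0 by rewrite gauss_norm_N gauss_norm_Z hg.
apply: Rle_antisym; first by rewrite -heg Rmax_comm; apply: gauss_norm_D_le.
case: (Rle_or_lt (gauss_norm r f) (av e * av g`_0)) => hc.
  rewrite Rmax_left //; have := coef_le_gauss_norm r (f - e *: g)%ring 0.
  by rewrite coefB coefZ f0 sub0r (avN hav) (avM hav) /= Rmult_1_r.
by rewrite Rmax_right ?gauss_norm_D_eq ?heg //; lra.
Qed.

Lemma gauss_norm_mono r1 r2 f : 0 <= r2 <= r1 -> gauss_norm r2 f <= gauss_norm r1 f.
Proof.
move=> hr; apply: gauss_norm_le => i; apply: Rle_trans (coef_le_gauss_norm r1 f i).
exact: Rmult_le_compat_l (av_ge0 hav _) (pow_incr _ _ _ hr).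
Qed.

Lemma horner_le_gauss_norm f z : av f.[z]%ring <= gauss_norm (av z) f.
Proof.
rewrite horner_coef; apply: av_sum_le => // [|i]; first exact: gauss_norm_ge0.
by rewrite (avM hav) (avX hav); apply: coef_le_gauss_norm.
Qed.

Lemma gauss_norm_mulX_le r f : 0 <= r -> gauss_norm r ('X * f)%ring <= r * gauss_norm r f.
Proof.
move=> r0; apply: gauss_norm_le => -[|i]; rewrite coefXM /=.
  by rewrite (av0 hav) Rmult_0_l; apply/Rmult_le_pos/gauss_norm_ge0.
have -> : av f`_i * r ^ i.+1 = r * (av f`_i * r ^ i) by rewrite /=; ring.
exact: Rmult_le_compat_l r0 (coef_le_gauss_norm r f i).
Qed.

Lemma gauss_norm_XsubC_mul_le r b f : 0 <= r ->
  gauss_norm r (('X - b%:P) * f)%ring <= Rmax r (av b) * gauss_norm r f.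
Proof.
move=> r0; rewrite mulrBl mul_polyC.
apply: Rle_trans (gauss_norm_D_le _ _ r0) _.
rewrite gauss_norm_N gauss_norm_Z.
apply: Rmax_lub; last exact: Rmult_le_compat_r (gauss_norm_ge0 _ _) (Rmax_r _ _).
apply: Rle_trans (gauss_norm_mulX_le f r0) _.
exact: Rmult_le_compat_r (gauss_norm_ge0 _ _) (Rmax_l _ _).
Qed.

Lemma gauss_norm_prod_XsubC_le r lc bs : 0 <= r ->
  gauss_norm r (lc *: \prod_(b <- bs) ('X - b%:P))%ring
    <= av lc * \big[Rmult/1]_(b <- bs) Rmax r (av b).
Proof.
move=> r0; rewrite gauss_norm_Z; apply: Rmult_le_compat_l (av_ge0 hav _) _.
elim: bs => [|b bs IH].
  rewrite !big_nil; apply: gauss_norm_le => -[|i]; rewrite coefC /=.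
    by rewrite (av1 hav); lra.
  by rewrite (av0 hav); lra.
rewrite !big_cons; apply: Rle_trans (gauss_norm_XsubC_mul_le _ _ r0) _.
apply: Rmult_le_compat_l IH; apply: Rle_trans r0 (Rmax_l _ _).
Qed.

Lemma gauss_norm_XsubC r a : 0 <= r -> gauss_norm r ('X - a%:P)%ring = Rmax (av a) r.
Proof.
move=> r0; apply: Rle_antisym.
  apply: gauss_norm_le => -[|[|i]]; rewrite coefB coefX coefC /=.
  - by rewrite sub0r (avN hav) Rmult_1_r; apply: Rmax_l.
  - by rewrite subr0 (av1 hav) Rmult_1_l Rmult_1_r; apply: Rmax_r.
  - rewrite subr0 (av0 hav) Rmult_0_l; apply: Rle_trans (av_ge0 hav a) (Rmax_l _ _).
apply: Rmax_lub.
  by have := coef_le_gauss_norm r ('X - a%:P)%ring 0; rewrite coefB coefX coefC /= sub0r (avN hav) Rmult_1_r.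
have := coef_le_gauss_norm r ('X - a%:P)%ring 1; rewrite coefB coefX coefC /= subr0 (av1 hav); lra.
Qed.

Lemma gauss_norm_lipschitz (d : nat) (B c r1 r2 : R) f : 0 < B -> (size f <= d.+1)%nat ->
  (forall i, av f`_i * B ^ i <= c) -> 0 <= r1 <= B -> 0 <= r2 <= B ->
  Rabs (gauss_norm r1 f - gauss_norm r2 f) <= INR d / B * c * Rabs (r1 - r2).
Proof.
move=> hB hsize hc.
have c0 : 0 <= c by have := hc (size f); rewrite nth_default // (av0 hav) Rmult_0_l.
wlog h12 : r1 r2 / r2 <= r1.
  move=> hw hr1 hr2; case: (Rle_or_lt r2 r1) => h; first exact: hw.
  by rewrite Rabs_minus_sym (Rabs_minus_sym r1); apply: hw => //; lra.
move=> hr1 hr2.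
rewrite Rabs_right; last by have := gauss_norm_mono f (conj (proj1 hr2) h12); lra.
rewrite Rabs_right; last lra.
suff : gauss_norm r1 f <= gauss_norm r2 f + INR d / B * c * (r1 - r2) by lra.
have hL : 0 <= INR d / B * c * (r1 - r2).
  apply: Rmult_le_pos; last lra; apply: Rmult_le_pos c0.
  by apply: Rmult_le_pos (pos_INR d) _; left; apply: Rinv_0_lt_compat.
apply: gauss_norm_le => -[|k]; have h2 := coef_le_gauss_norm r2 f; first by have := h2 O; simpl; lra.
case: (ltnP k.+1 (size f)) => hk; last first.
  by rewrite nth_default // (av0 hav) Rmult_0_l; have := gauss_norm_ge0 r2 f; lra.
have hkd : INR k.+1 <= INR d by apply/le_INR/leP; lia.
have := mul_pow_sub_le hB (av_ge0 hav f`_k.+1) (hc k.+1) (conj (proj1 hr2) h12) (proj2 hr1).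
have := h2 k.+1.
have : INR k.+1 / B * c * (r1 - r2) <= INR d / B * c * (r1 - r2).
  apply: Rmult_le_compat_r; first lra.
  apply: Rmult_le_compat_r c0 _; apply: Rmult_le_compat_r hkd; left; exact: Rinv_0_lt_compat.
lra.
Qed.

End GaussNorm.

Section ClosedField.
Variables (K : closedFieldType) (av : K -> R).
Hypothesis hav : nonarch_abs av.

Lemma exists_equidistant_family n : exists S : seq K,
  [/\ size S = n.+1, uniq S, forall w, w \in S -> av w <= 1
    & {in S &, forall w w', w != w' -> av (w - w')%ring = 1}].
Proof.
elim: n => [|n [S [hsize hu hS1 hS]]].
  exists [:: 0%ring]; split=> // [w|w w']; rewrite !inE => /eqP ->; last by move=> /eqP ->; rewrite eqxx.
  by rewrite (av0 hav); lra.
have : size (\prod_(w <- S) ('X - w%:P) - 1)%ring != 1%nat.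
  by rewrite size_addl ?size_opp ?size_poly1 size_prod_XsubC hsize.
case/closed_rootP => om /rootP; rewrite hornerD hornerN hornerC horner_prod.
under eq_bigr do rewrite hornerXsubC.
move=> /eqP; rewrite subr_eq0 => /eqP hom.
(* The factors [av (om - w)] are at most 1 and multiply to 1, hence all equal 1. *)
have hprod : \big[Rmult/1]_(w <- S) av (om - w)%ring = 1 by rewrite -(av_prod hav) hom av1.
have hom1 : av om <= 1.
  apply: Rnot_lt_le => h; suff : 1 < \big[Rmult/1]_(w <- S) av (om - w)%ring by lra.
  apply: Rprod_gt1; first by rewrite -size_eq0 hsize.
  move=> w hw; have hlt : av (- w)%ring < av om by rewrite (avN hav); have := hS1 w hw; lra.
  by rewrite (avD_eq hav hlt).
have hall : forall w, w \in S -> av (om - w)%ring = 1.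
  apply: Rprod_eq1 hprod => w hw; split; first exact: av_ge0.
  by apply: Rle_trans (avB_le hav _ _) _; apply: Rmax_lub => //; apply: hS1.
have hnot : om \notin S.
  by apply/negP => h; have := hall om h; rewrite subrr (av0 hav); lra.
exists (om :: S); split; [by rewrite /= hsize | by rewrite /= hnot hu | | ].
  by move=> w; rewrite inE => /orP [/eqP ->|]; [ | apply: hS1].
move=> w w'; rewrite !inE => /orP [/eqP ->|hw] /orP [/eqP ->|hw'] hne.
- by rewrite eqxx in hne.
- exact: hall.
- by rewrite -opprB (avN hav) hall.
- exact: hS.
Qed.

Lemma value_group_dense a b : 0 < a < b -> exists t, a < av t < b.
Proof.
move=> [ha hab]; have [x1 hx1] := exists_av_gt1 hav.
set lam := b / a.
have hlam : 1 < lam.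
  apply: (Rmult_lt_reg_r a) => //; rewrite /lam Rmult_1_l /Rdiv Rmult_assoc Rinv_l; lra.
have [n hn] := INR_archimed (lam - 1) (av x1) ltac:(lra).
have n0 : (0 < n)%nat by case: n hn => //=; lra.
have : size ('X^n - x1%:P)%ring != 1%nat.
  rewrite size_addl size_polyXn; first by rewrite eqSS -lt0n.
  by rewrite size_opp size_polyC ltnS; case: (x1 != 0%ring).
case/closed_rootP => y /rootP; rewrite hornerD hornerN hornerXn hornerC.
move=> /eqP; rewrite subr_eq0 => /eqP hy.
have hqn : av y ^ n = av x1 by rewrite -(avX hav) hy.
have hq1 : 1 < av y.
  apply: Rnot_le_lt => hle; have : av y ^ n <= 1 ^ n by apply: pow_incr; have := av_ge0 hav y; lra.
  by rewrite pow1; lra.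
have hqlam : av y < lam.
  apply: Rnot_le_lt => hle; have : lam ^ n <= av y ^ n by apply: pow_incr; lra.
  have := bernoulli_ineq n (ltac:(lra) : -1 <= lam - 1); rewrite Rplus_minus; lra.
have hy0 : y <> 0%ring by move=> e; move: hq1; rewrite e (av0 hav); lra.
have hyb : a * av y < b.
  have -> : b = a * lam by rewrite /lam; field; lra.
  exact: Rmult_lt_compat_l.
have [N [M hNM]] := exists_pow_ratio_between hq1 ha hyb.
have hyM : (y ^+ M)%ring <> 0%ring by apply/eqP/expf_neq0/eqP.
by exists (y ^+ N / y ^+ M)%ring; rewrite (avM hav) (avV hav hyM) !(avX hav).
Qed.

(* Maximum modulus: [z] is a point [t * w] outside every open disc [D(b, av t)^-]
   around a root [b] of [F], so that [av (z - b) >= Rmax (av t) (av b)]. *)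
Lemma exists_gauss_norm_le_horner (F : {poly K}) t : t != 0%ring ->
  exists z, av z <= av t /\ gauss_norm av (av t) F <= av F.[z]%ring.
Proof.
move=> t0; have [bs hbs] := closed_field_poly_normal F.
have [S [hsize hu hS1 hS]] := exists_equidistant_family (size bs).
set xs := [seq (t * w)%ring | w <- S].
have hxs_uniq : uniq xs by rewrite map_inj_uniq //; apply: mulfI.
have hxs_dist : {in xs &, forall x y, x != y -> av t <= av (x - y)%ring}.
  move=> _ _ /mapP [w hw ->] /mapP [w' hw' ->] hne.
  rewrite -mulrBr (avM hav) hS // ?Rmult_1_r; [lra | by apply: contraNneq hne => ->].
have hxs_size : (size bs < size xs)%nat by rewrite size_map hsize.
have [z /mapP [w hw ->] hfar] := exists_far_point hav hxs_uniq hxs_dist hxs_size.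
have htw : av (t * w)%ring <= av t.
  by rewrite (avM hav); have := hS1 w hw; have := av_ge0 hav t; nra.
exists (t * w)%ring; split=> //.
have -> : av F.[t * w]%ring = av (lead_coef F) * \big[Rmult/1]_(b <- bs) av (t * w - b)%ring.
  by rewrite {1}hbs hornerZ horner_prod (avM hav) (av_prod hav); under eq_bigr do rewrite hornerXsubC.
rewrite {1}hbs; apply: Rle_trans (gauss_norm_prod_XsubC_le hav _ _ (av_ge0 hav t)) _.
apply: Rmult_le_compat_l (av_ge0 hav _) _; apply: Rprod_le => b hb; split.
  exact: Rle_trans (av_ge0 hav t) (Rmax_l _ _).
apply: Rmax_lub; first exact: hfar.
case: (Rle_or_lt (av b) (av t)) => hbt; first exact: Rle_trans hbt (hfar b hb).
have hlt : av (t * w)%ring < av (- b)%ring by rewrite (avN hav); lra.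
by rewrite addrC (avD_eq hav hlt) (avN hav); apply: Rle_refl.
Qed.

Lemma coef_le_of_horner_le (F : {poly K}) B c : 0 < B ->
  (forall z, av z < B -> av F.[z]%ring <= c) -> forall i, av F`_i * B ^ i <= c.
Proof.
move=> hB hF i; apply: mul_pow_le_of_lt (av_ge0 hav _) hB _ => s [s0 sB].
have [t [hst htB]] := value_group_dense (conj s0 sB).
have t0 : t != 0%ring by apply/eqP => e; move: hst; rewrite e (av0 hav); lra.
have [z [hzt hFz]] := exists_gauss_norm_le_horner F t0.
apply: Rle_trans (hF z _); last lra.
apply: Rle_trans hFz; apply: Rle_trans (coef_le_gauss_norm hav (av t) F i).
by apply: Rmult_le_compat_l (av_ge0 hav _) (pow_incr _ _ _ _); lra.
Qed.

Lemma gauss_norm_eq_coef0 (G : {poly K}) r : 0 <= r ->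
  (forall b, root G b -> r <= av b) -> gauss_norm av r G = av G`_0.
Proof.
move=> r0 hroots; apply: Rle_antisym; last first.
  by have := coef_le_gauss_norm hav r G 0; rewrite /= Rmult_1_r.
have [->|G0] := eqVneq G 0%ring.
  by apply: gauss_norm_le => // i; rewrite !coef0 (av0 hav) Rmult_0_l; lra.
have [bs hbs] := closed_field_poly_normal G.
have hb : forall b, b \in bs -> r <= av b.
  by move=> b hb; apply: hroots; rewrite hbs rootZ ?lead_coef_eq0 // root_prod_XsubC.
rewrite -horner_coef0 hbs; apply: Rle_trans (gauss_norm_prod_XsubC_le hav _ _ r0) _.
rewrite hornerZ horner_prod (avM hav) (av_prod hav); apply: Rmult_le_compat_l (av_ge0 hav _) _.
apply: Rprod_le => b hbb; rewrite hornerXsubC sub0r (avN hav) Rmax_right; last exact: hb.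
by split; [apply: Rle_trans r0 _; apply: hb | apply: Rle_refl].
Qed.

End ClosedField.

Section BerkovichDistance.
Variables (K : fieldType) (av : K -> R).
Hypothesis hav : nonarch_abs av.

Lemma delta_inf_disc (x y : {poly K} -> R) c rx ry : 0 <= rx -> 0 <= ry ->
  (forall a, x ('X - a%:P)%ring = Rmax (av (a - c)%ring) rx) ->
  (forall a, y ('X - a%:P)%ring = Rmax (av (a - c)%ring) ry) ->
  delta_inf x y = Rmax rx ry.
Proof.
move=> rx0 ry0 hx hy; apply: Rinf_min.
  by exists c; rewrite hx hy subrr (av0 hav) (Rmax_right 0 rx) // (Rmax_right 0 ry).
move=> _ [a ->]; rewrite hx hy; have := av_ge0 hav (a - c)%ring.
by rewrite /Rmax => ?; repeat destruct Rle_dec; lra.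
Qed.

(* [deltaG] only evaluates points on linear polynomials, where [x] and [y] agree
   with the disc points zeta_{c,rx} and zeta_{c,ry}. *)
Lemma berk_dist_disc (x y : {poly K} -> R) c rx ry :
  av c <= 1 -> 0 <= rx <= 1 -> 0 <= ry <= 1 ->
  (forall a, x ('X - a%:P)%ring = Rmax (av (a - c)%ring) rx) ->
  (forall a, y ('X - a%:P)%ring = Rmax (av (a - c)%ring) ry) ->
  berk_dist (Some x) (Some y) = Rabs (rx - ry).
Proof.
move=> hc hrx hry hx hy.
have hX : forall (z : {poly K} -> R) rz, 0 <= rz <= 1 ->
    (forall a, z ('X - a%:P)%ring = Rmax (av (a - c)%ring) rz) -> Rmax 1 (z 'X%ring) = 1.
  move=> z rz hrz hz; have := hz 0%ring; rewrite polyC0 subr0 sub0r (avN hav) => ->.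
  by rewrite /Rmax; repeat destruct Rle_dec; lra.
rewrite /berk_dist /diamG /deltaG (hX _ _ hrx hx) (hX _ _ hry hy) !Rmult_1_r !Rdiv_1_r.
rewrite (delta_inf_disc _ _ hx hy) ?(delta_inf_disc _ _ hx hx) ?(delta_inf_disc _ _ hy hy);
  try lra.
by rewrite /Rabs /Rmax; repeat destruct Rle_dec; destruct Rcase_abs; lra.
Qed.

End BerkovichDistance.

Section RationalMap.
Variables (K : closedFieldType) (av : K -> R).
Hypothesis hav : nonarch_abs av.
Variables (P Q : {poly K}) (B0 : R).
Hypothesis hB0 : 0 < B0.
Hypothesis hpoles : forall z, av z < B0 -> Q.[z]%ring <> 0%ring.
Hypothesis himg_le1 : forall z, av z < B0 -> av (phiK P Q z - phiK P Q 0)%ring <= 1.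

Local Notation c0 := (phiK P Q 0%ring).
Local Notation F := (P - c0 *: Q)%ring.

Lemma phi_homog_XsubC a : phi_homog P Q ('X - a%:P)%ring = (P - a *: Q)%ring.
Proof.
rewrite /phi_homog size_XsubC !big_ord_recl big_ord0 /= !coefB !coefX !coefC /=.
by rewrite expr0 expr1 mul1r mulr1 sub0r subr0 scale1r addr0 scaleNr addrC.
Qed.

Lemma horner0_Q_neq0 : (Q.[0] != 0)%ring.
Proof. by apply/eqP/hpoles; rewrite (av0 hav). Qed.

Lemma coef0_Q_gt0 : 0 < av Q`_0.
Proof. by apply/(av_gt0 hav)/eqP; rewrite -horner_coef0 horner0_Q_neq0. Qed.

Lemma gauss_norm_Q r : 0 <= r <= B0 -> gauss_norm av r Q = av Q`_0.
Proof.
move=> [r0 rB]; apply: gauss_norm_eq_coef0 => // b hb.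
by apply: Rnot_lt_le => hbr; apply: (hpoles (z := b)); [lra | apply/rootP].
Qed.

Lemma coef0_F : (F`_0 = 0)%ring.
Proof. by rewrite coefB coefZ /phiK -!horner_coef0 divfK ?subrr // horner0_Q_neq0. Qed.

Lemma horner_F_le z : av z < B0 -> av F.[z]%ring <= av Q`_0.
Proof.
move=> hz; have hQz := hpoles hz.
have -> : F.[z]%ring = ((phiK P Q z - c0) * Q.[z])%ring.
  by rewrite hornerD hornerN hornerZ mulrBl /phiK divfK //; apply/eqP.
rewrite (avM hav) -(gauss_norm_Q (conj (av_ge0 hav z) (Rlt_le _ _ hz))).
apply: Rle_trans (Rmult_le_compat_r _ _ _ (av_ge0 hav _) (himg_le1 hz)) _.
by rewrite Rmult_1_l; apply: horner_le_gauss_norm.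
Qed.

Lemma coef_F_le i : av F`_i * B0 ^ i <= av Q`_0.
Proof. by apply: (coef_le_of_horner_le hav hB0) => z; apply: horner_F_le. Qed.

Lemma gauss_norm_F_le r : 0 <= r <= B0 -> gauss_norm av r F <= av Q`_0.
Proof.
move=> hr; apply: gauss_norm_le => // i; apply: Rle_trans (coef_F_le i).
exact: Rmult_le_compat_l (av_ge0 hav _) (pow_incr _ _ _ hr).
Qed.

Lemma gauss_norm_F_ratio_Icc r : 0 <= r <= B0 -> 0 <= gauss_norm av r F / av Q`_0 <= 1.
Proof.
move=> hr; have hq := coef0_Q_gt0; have := gauss_norm_F_le hr.
have := gauss_norm_ge0 av r F; split; first by apply: Rle_mult_inv_pos.
apply: (Rmult_le_reg_r (av Q`_0)) => //.
by rewrite /Rdiv Rmult_assoc Rinv_l ?Rmult_1_r ?Rmult_1_l; lra.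
Qed.

Lemma size_F_le : (size F <= (phi_deg P Q).+1)%nat.
Proof.
apply: leq_trans (size_add _ _) _; rewrite size_opp geq_max /phi_deg; apply/andP; split.
  by apply: leq_trans (leqSpred _) _; rewrite ltnS leq_maxl.
apply: leq_trans (size_scale_leq c0 Q) _.
by apply: leq_trans (leqSpred _) _; rewrite ltnS leq_maxr.
Qed.

Lemma phiB_zeta0 r : 0 <= r <= B0 -> exists u,
  phiB av P Q (Some (zeta av 0%ring r)) = Some u /\
  forall a, u ('X - a%:P)%ring = Rmax (av (a - c0)%ring) (gauss_norm av r F / av Q`_0).
Proof.
move=> hr; have hq := coef0_Q_gt0.
rewrite /phiB; case: Req_EM_T => [|_]; first by rewrite zeta0_gauss_norm gauss_norm_Q //; lra.
eexists; split; first reflexivity.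
move=> a /=; rewrite size_XsubC /= phi_homog_XsubC !zeta0_gauss_norm gauss_norm_Q // Rmult_1_r.
have -> : (P - a *: Q)%ring = (F - (a - c0) *: Q)%ring by rewrite scalerBl opprB addrA subrK.
by rewrite gauss_norm_subZ ?coef0_F ?gauss_norm_Q // ?Rmax_div //; case: hr.
Qed.

Lemma phiB_lipschitz_on_segment x y : B0 <= 1 -> av c0 <= 1 ->
  seg0 av B0 x -> seg0 av B0 y -> x <> y ->
  berk_dist (phiB av P Q x) (phiB av P Q y) / berk_dist x y <= INR (phi_deg P Q) / B0.
Proof.
move=> hB01 hc0 [r1 [hr1 ->]] [r2 [hr2 ->]] hxy.
have hzeta r : 0 <= r -> forall a, zeta av 0%ring r ('X - a%:P)%ring = Rmax (av (a - 0)%ring) r.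
  by move=> r0 a; rewrite subr0 zeta0_gauss_norm gauss_norm_XsubC.
have [u1 [-> hu1]] := phiB_zeta0 hr1.
have [u2 [-> hu2]] := phiB_zeta0 hr2.
rewrite (berk_dist_disc hav hc0 (gauss_norm_F_ratio_Icc hr1) (gauss_norm_F_ratio_Icc hr2) hu1 hu2).
rewrite (berk_dist_disc hav (c := 0%ring) _ _ _ (hzeta _ (proj1 hr1)) (hzeta _ (proj1 hr2)));
  [| by rewrite (av0 hav); lra | split; lra | split; lra].
apply: lipschitz_ratio_le coef0_Q_gt0 _ _; first by move=> e; apply: hxy; rewrite e.
apply: (gauss_norm_lipschitz hav hB0 size_F_le) => //; exact: coef_F_le.
Qed.

End RationalMap.

Theorem proposition5p2
  (K : closedFieldType) (av : K -> R) (hav : nonarch_abs av)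
  (P Q : {poly K}) (hQ : Q <> 0%ring) (hcop : coprimep P Q)
  (hd : (1 <= phi_deg P Q)%nat)
  (B0 : R) (hB0 : is_lub (B0_set av P Q) B0)
  (hpoles : forall z : K, av z < B0 -> Q.[z]%ring <> 0%ring)
  (R0 : R) (hR0 : 0 < R0)
  (himg : forall w : K,
      (exists z : K, av z < B0 /\ w = phiK P Q z) <->
      av (w - phiK P Q 0%ring)%ring < R0)
  (hc0 : av (phiK P Q 0%ring) <= 1)
  (hR : R0 <= 1) :
  forall x y : P1B K,
    seg0 av B0 x -> seg0 av B0 y -> x <> y ->
    berk_dist (phiB av P Q x) (phiB av P Q y) / berk_dist x y
      <= INR (phi_deg P Q) / B0.
Proof.
have [hB0pos hB01] : 0 < B0 <= 1 by apply: is_lub_Ioc hB0 => r [].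
have himg1 : forall z, av z < B0 -> av (phiK P Q z - phiK P Q 0)%ring <= 1.
  by move=> z hz; apply/Rlt_le/(Rlt_le_trans _ _ _ _ hR)/himg; exists z.
by move=> x y; apply: (phiB_lipschitz_on_segment hav hB0pos hpoles himg1).
Qed.
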